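(* (a) Let $\Gamma$ be a triangulation of a connected closed surface $M$ with a fixed $z$-orientation $\tau$ such that every face of $\Gamma$ is of type I and every zigzag in $\tau$ is homogeneous. Let $\Gamma_{II}$ be the subgraph of $\Gamma$ formed by all vertices of type II and all edges of type II (directed as type II edges). Then $\Gamma_{II}$ is a closed $2$-cell embedding in $M$ of a connected simple Eulerian digraph (every vertex has in-degree equal to out-degree) in which the boundary of every face is a directed cycle, and $\Gamma=\mathrm{T}(\Gamma_{II})$. (b) Conversely, let $\Gamma'$ be a closed $2$-cell embedding in $M$ of a connected simple Eulerian digraph such that the boundary of every face is a directed cycle. Then the triangulation $\mathrm{T}(\Gamma')$ admits a unique $z$-orientation for which all faces are of type I, all zigzags are homogeneous, and $\Gamma'$ (with its directions) is exactly the subgraph of $\mathrm{T}(\Gamma')$ formed by all vertices and edges of type II (with their type II directions).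
   Context: Let $M$ be a connected closed $2$-dimensional surface (not necessarily orientable). A triangulation of $M$ is a $2$-cell embedding of a connected simple finite graph in $M$ such that every face is a triangle. A zigzag in a triangulation $\Gamma$ is a sequence of edges $(e_i)_{i\in\mathbb N}$ such that for every $i$: $e_i$ and $e_{i+1}$ are distinct edges of a common face; the face containing $e_i,e_{i+1}$ is different from the face containing $e_{i+1},e_{i+2}$; and $e_i$, $e_{i+2}$ have no common vertex. It is regarded as a cyclic sequence $e_1,\dots,e_n$ ($n$ the minimal period), and passes through each of its edges in a definite direction (from the vertex shared with the previous edge to the vertex shared with the next). The reversal $Z^{-1}$ of a zigzag is a zigzag, $Z\ne Z^{-1}$. If $\Gamma$ has exactly $k$ zigzags up to reversal, a $z$-orientation is a set $\tau$ of $k$ zigzags containing exactly one of $Z,Z^{-1}$ for each zigzag $Z$. For a $z$-orientation, each edge either occurs twice in one zigzag of $\tau$ or once in each of two distinct zigzags of $\tau$ (and in no others); it is of type I if these two passages are in opposite directions and of type II if in the same direction (type II edges are directed accordingly). A vertex is of type I if all edges containing it are of type I, otherwise of type II. A face is of type I if it contains exactly two edges of type I and one edge of type II. When all faces are of type I, a zigzag is homogeneous if it is a cyclic sequence $e_1,e_1',e_1'',e_2,e_2',e_2'',\dots,e_n,e_n',e_n''$ in which every $e_i$ is of type II and every $e_i',e_i''$ is of type I. A $2$-cell embedding is closed if every face is homeomorphic to a closed $2$-disc. For a closed $2$-cell embedding $\Gamma'$ of a connected simple finite graph in $M$, $\mathrm{T}(\Gamma')$ denotes the triangulation of $M$ obtained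 by choosing a point $v_F$ in the interior of every face $F$, adding all $v_F$ as vertices, and joining each $v_F$ by an edge (inside $F$) to every vertex of $F$. *)

(* Surfaces and 2-cell embeddings are encoded combinatorially
   by generalized maps (flag systems). *)
From HB Require Import structures.
From mathcomp Require Import all_boot.
Set Implicit Arguments. Unset Strict Implicit. Unset Printing Implicit Defensive.

(* A generalized map: a finite set of flags (vertex, edge, face) with the three
   flag-switching operators: a0 changes the vertex, a1 the edge, a2 the face. *)
Record gmap := GMap {
  dart :> finType;
  a0 : dart -> dart;
  a1 : dart -> dart;
  a2 : dart -> dart }.

Section GMapDefs.
Variable G : gmap.
Implicit Types x y z : G.

Definition rel2 (f g : G -> G) : rel G := fun x y => (y == f x) || (y == g x).
Definition vrel := rel2 (@a1 G) (@a2 G).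
Definition erel := rel2 (@a0 G) (@a2 G).
Definition frel := rel2 (@a0 G) (@a1 G).
Definition arel : rel G := fun x y => [|| y == a0 x, y == a1 x | y == a2 x].

Definition sameV x y := connect vrel x y.
Definition sameE x y := connect erel x y.
Definition sameF x y := connect frel x y.

Definition is_gmap : Prop :=
  involutive (@a0 G) /\ involutive (@a1 G) /\ involutive (@a2 G) /\
  (forall x, a0 x != x) /\ (forall x, a1 x != x) /\ (forall x, a2 x != x) /\
  (forall x, a0 (a2 x) = a2 (a0 x)) /\ (forall x, a0 (a2 x) != x).

Definition gconnected : Prop := forall x y, connect arel x y.

Definition simple_gmap : Prop :=
  (forall x, ~~ sameV x (a0 x)) /\
  (forall x y, sameV x y -> sameV (a0 x) (a0 y) -> sameE x y).

Definition face_flags x := [set y | sameF x y].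
Definition face_vertices x := [set root vrel y | y in face_flags x].
Definition face_edges x := [set root erel y | y in face_flags x].

(* every face is a triangle (its boundary walk has length 3) *)
Definition triangular_faces : Prop := forall x, #|face_flags x| = 6.

(* closed 2-cell embedding: every face boundary walk is a cycle
   (no repeated vertex, no repeated edge) *)
Definition closed_faces : Prop := forall x,
  (#|face_vertices x|).*2 = #|face_flags x| /\ (#|face_edges x|).*2 = #|face_flags x|.

Definition triangulation : Prop :=
  [/\ is_gmap, gconnected, simple_gmap & triangular_faces].

(* A directed zigzag (Petrie walk) is an orbit of rho; the flag x records
   that the zigzag passes the edge of x from the vertex of x to the vertex
   of a0 x.  The reversed zigzag of the orbit of x is the orbit of a1 x. *)
Definition rho x := a1 (a0 (a2 x)).

(* z-orientation: tau is a union of directed zigzags containing exactly one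
   of Z, Z^{-1} for each zigzag Z *)
Definition z_orientation (tau : {set G}) : Prop :=
  (forall x, (rho x \in tau) = (x \in tau)) /\
  (forall x, (a1 x \in tau) = (x \notin tau)).

Variable tau : {set G}.

(* the edge of x is passed twice in the same direction / in opposite directions *)
Definition typeII_edge x : bool :=
  [exists y, exists z, [&& y != z, y \in tau, z \in tau, sameE x y, sameE x z
                          & sameV y z]].
Definition typeI_edge x : bool :=
  [exists y, exists z, [&& y \in tau, z \in tau, sameE x y, sameE x z
                          & sameV y (a0 z)]].
(* x sits at the tail (start) of its edge, which is of type II *)
Definition typeII_tail x : bool :=
  typeII_edge x && [exists y, [&& y \in tau, sameE x y & sameV x y]].

Definition typeI_vertex x : bool := [forall y, sameV x y ==> typeI_edge y].
Definition typeII_vertex x : bool := ~~ typeI_vertex x.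

Definition typeI_face x : bool :=
  (#|[set root erel y | y in [pred y | sameF x y && typeI_edge y]]| == 2) &&
  (#|[set root erel y | y in [pred y | sameF x y && typeII_edge y]]| == 1).

Definition homogeneous x : Prop :=
  exists y, fconnect rho x y /\ forall k, typeII_edge (iter k rho y) = (3 %| k).

End GMapDefs.

Section Digraph.
Variables (G : gmap) (tl : pred G). (* tl x : x lies at the tail of its edge *)

Definition orientation : Prop :=
  forall x, tl (a2 x) = tl x /\ tl (a0 x) = ~~ tl x.

Definition eulerian : Prop := forall x,
  #|[set root (@erel G) y | y in [pred y | sameV x y && tl y]]| =
  #|[set root (@erel G) y | y in [pred y | sameV x y && ~~ tl y]]|.

(* at each corner of each face one edge enters and the other leaves,
   i.e. every face boundary (a cycle) is a directed cycle *)
Definition directed_faces : Prop := forall x, tl (a1 x) = ~~ tl x.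

Definition good_directed_embedding : Prop :=
  is_gmap G /\ gconnected G /\ simple_gmap G /\ closed_faces G /\
  orientation /\ eulerian /\ directed_faces.
End Digraph.

(* flags of T(G) are pairs (x,i): i = 0 : (v(x), e(x), triangle(x));
   i = 1 : (v(x), spoke v(x)v_F, triangle(x)); i = 2 : (v_F, spoke, triangle(x)),
   where triangle(x) is the triangle v(x) v(a0 x) v_F with F the face of x. *)
Section TConstr.
Variable G : gmap.
Definition Tdart : finType := (G * 'I_3)%type.
Definition i0 : 'I_3 := @Ordinal 3 0 isT.
Definition i1 : 'I_3 := @Ordinal 3 1 isT.
Definition i2 : 'I_3 := @Ordinal 3 2 isT.

Definition t0 (p : Tdart) : Tdart :=
  match nat_of_ord p.2 with 0 => (a0 p.1, i0) | 1 => (p.1, i2) | _ => (p.1, i1) end.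
Definition t1 (p : Tdart) : Tdart :=
  match nat_of_ord p.2 with 0 => (p.1, i1) | 1 => (p.1, i0) | _ => (a0 p.1, i2) end.
Definition t2 (p : Tdart) : Tdart :=
  match nat_of_ord p.2 with 0 => (a2 p.1, i0) | 1 => (a1 p.1, i1) | _ => (a1 p.1, i2) end.

Definition Tmap : gmap := GMap t0 t1 t2.
End TConstr.

Definition gmap_iso (H G : gmap) (phi : H -> G) : Prop :=
  [/\ bijective phi,
      (forall p, phi (a0 p) = a0 (phi p)),
      (forall p, phi (a1 p) = a1 (phi p)) &
      (forall p, phi (a2 p) = a2 (phi p))].

From Pilot Require Import Defs.
From HB Require Import structures.
From mathcomp Require Import all_boot zify.
Set Implicit Arguments. Unset Strict Implicit. Unset Printing Implicit Defensive.

(* Let every face of the triangulation G be of type I.  Then every triangle has exactly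
   one type II edge, and the opposite vertex, its apex, is met by type I edges only:
   being an apex is preserved by a1, and also by a2 because, by homogeneity of the
   zigzags, vturn = a1 a2 a1 maps type II flags to type II flags.  Hence the type II flags
   with the operators a0, vturn, a2 form a flag system G' whose faces are the links of the
   apexes, the z-orientation directs its edges, and sending (x, 0), (x, 1), (x, 2) to the
   flags x, a1 x, a0 (a1 x) of the triangle of x is an isomorphism T(G') ~ G.
   Conversely, a zigzag of T(G') runs through an edge of G' and then two spokes, so
   choosing the zigzags that follow the directed edges of G' gives the pattern II, I, I;
   the z-orientation is forced by the direction of one edge in each zigzag. *)

Lemma homo_connect (T U : finType) (e : rel T) (e' : rel U) (f : T -> U) :
  (forall a b, e a b -> connect e' (f a) (f b)) ->
  forall a b, connect e a b -> connect e' (f a) (f b).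
Proof.
move=> fe a b /connectP [p pth ->]; elim: p a pth => [|c p IHp] a /=.
  by move=> _; exact: connect0.
by case/andP=> /fe eac /IHp; exact: connect_trans.
Qed.

Lemma connect_invariant (T : finType) (e : rel T) (P : pred T) x y :
  P x -> (forall a b, P a -> e a b -> P b) -> connect e x y -> P y.
Proof.
move=> Px eP /connectP [p pth ->]; elim: p x Px pth => [|c p IHp] x Px //=.
by case/andP=> /(eP _ _ Px); exact: IHp.
Qed.

Lemma eq_imset_dom (T U : finType) (f : T -> U) (A B : {pred T}) :
  A =i B -> f @: A = f @: B.
Proof.
by move=> AB; apply/setP => u; apply/imsetP/imsetP => -[y yA ->]; exists y; rewrite ?AB // -AB.
Qed.

Lemma card_imset_2to1 (T U : finType) (S : {set T}) (s : T -> T) (r : T -> U) :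
  (forall y, y \in S -> s y \in S) -> (forall y, s y != y) ->
  (forall y y', y \in S -> y' \in S -> (r y' == r y) = (y' == y) || (y' == s y)) ->
  #|S| = (#|r @: S|).*2.
Proof.
move=> sS sN rE.
rewrite -sum1_card (partition_big r (mem (r @: S))) /=; last by move=> y /imset_f.
rewrite -muln2 -sum_nat_const; apply: eq_bigr => u /imsetP [y0 y0S ->].
rewrite sum1dep_card; transitivity #|[set y0; s y0]|; last by rewrite cards2 eq_sym sN.
apply: eq_card => y; rewrite !inE.
case yS: (y \in S) => /=; first by rewrite rE.
by apply/esym/negbTE; apply/orP => -[] /eqP Ey; move: yS; rewrite Ey ?y0S ?sS.
Qed.

Section GMapTheory.
Variable G : gmap.
Hypothesis HG : is_gmap G.
Implicit Types x y z : G.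

Lemma a0K : involutive (@a0 G). Proof. by case: HG. Qed.
Lemma a1K : involutive (@a1 G). Proof. by case: HG => _ []. Qed.
Lemma a2K : involutive (@a2 G). Proof. by case: HG => _ [] _ []. Qed.
Lemma a0_neq x : a0 x != x. Proof. by case: HG => _ [] _ [] _ []. Qed.
Lemma a1_neq x : a1 x != x. Proof. by case: HG => _ [] _ [] _ [] _ []. Qed.
Lemma a2_neq x : a2 x != x. Proof. by case: HG => _ [] _ [] _ [] _ [] _ []. Qed.
Lemma a02C x : a0 (a2 x) = a2 (a0 x). Proof. by case: HG => _ [] _ [] _ [] _ [] _ [] _ []. Qed.
Lemma a02_neq x : a0 (a2 x) != x. Proof. by case: HG => _ [] _ [] _ [] _ [] _ [] _ []. Qed.
Lemma a0_inj : injective (@a0 G). Proof. exact: inv_inj a0K. Qed.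
Lemma a1_inj : injective (@a1 G). Proof. exact: inv_inj a1K. Qed.
Lemma a2_inj : injective (@a2 G). Proof. exact: inv_inj a2K. Qed.
Lemma a020 x : a0 (a2 (a0 x)) = a2 x. Proof. by rewrite a02C a0K. Qed.
Lemma a202 x : a2 (a0 (a2 x)) = a0 x. Proof. by rewrite -a02C a2K. Qed.

Lemma rel2_sym (f g : G -> G) : involutive f -> involutive g -> connect_sym (rel2 f g).
Proof.
move=> fK gK; apply: sym_connect_sym => x y; rewrite /rel2.
by apply/orP/orP => -[] /eqP ->; rewrite ?fK ?gK eqxx; auto.
Qed.

Lemma symV : connect_sym (@vrel G). Proof. exact: rel2_sym a1K a2K. Qed.
Lemma symE : connect_sym (@erel G). Proof. exact: rel2_sym a0K a2K. Qed.
Lemma symF : connect_sym (@Defs.frel G). Proof. exact: rel2_sym a0K a1K. Qed.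

Lemma sameV_refl x : sameV x x. Proof. exact: connect0. Qed.
Lemma sameE_refl x : sameE x x. Proof. exact: connect0. Qed.
Lemma sameF_refl x : sameF x x. Proof. exact: connect0. Qed.
Lemma sameV1 x : sameV x (a1 x). Proof. by apply: connect1; rewrite /vrel/rel2 eqxx. Qed.
Lemma sameV2 x : sameV x (a2 x). Proof. by apply: connect1; rewrite /vrel/rel2 eqxx orbT. Qed.
Lemma sameE0 x : sameE x (a0 x). Proof. by apply: connect1; rewrite /erel/rel2 eqxx. Qed.
Lemma sameE2 x : sameE x (a2 x). Proof. by apply: connect1; rewrite /erel/rel2 eqxx orbT. Qed.
Lemma sameF0 x : sameF x (a0 x). Proof. by apply: connect1; rewrite /Defs.frel/rel2 eqxx. Qed.
Lemma sameF1 x : sameF x (a1 x). Proof. by apply: connect1; rewrite /Defs.frel/rel2 eqxx orbT. Qed.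
Lemma sameV_sym x y : sameV x y = sameV y x. Proof. exact: symV. Qed.
Lemma sameE_sym x y : sameE x y = sameE y x. Proof. exact: symE. Qed.
Lemma sameF_sym x y : sameF x y = sameF y x. Proof. exact: symF. Qed.
Lemma sameV_trans x y z : sameV x y -> sameV y z -> sameV x z. Proof. exact: connect_trans. Qed.
Lemma sameF_trans x y z : sameF x y -> sameF y z -> sameF x z. Proof. exact: connect_trans. Qed.

Lemma sameE02 x : sameE x (a0 (a2 x)).
Proof. exact: connect_trans (sameE2 x) (sameE0 _). Qed.
Lemma sameV20 x : sameV (a0 x) (a0 (a2 x)).
Proof. by rewrite a02C; exact: sameV2. Qed.

Lemma sameE_flags x y : sameE x y -> y \in [:: x; a0 x; a2 x; a0 (a2 x)].
Proof.
apply: (connect_invariant (P := fun y => y \in [:: x; a0 x; a2 x; a0 (a2 x)])).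
  by rewrite inE eqxx.
move=> a b; rewrite /erel/rel2 !inE => Ha /orP [] /eqP ->;
by case/or4P: Ha => /eqP ->; rewrite ?a0K ?a2K ?a02C ?a202 ?a020 ?a0K ?a2K eqxx ?orbT.
Qed.

Lemma sameE_root x y : sameE x y -> root (@erel G) x = root (@erel G) y.
Proof. exact/(rootP symE). Qed.

End GMapTheory.

Section ZOrientation.
Variable G : gmap.
Hypothesis HG : is_gmap G.
Variable tau : {set G}.
Hypothesis Hz : z_orientation tau.
Hypothesis loopless : forall x : G, ~~ sameV x (a0 x).
Implicit Types x y z : G.

Lemma mem_tau_rho x : (rho x \in tau) = (x \in tau). Proof. by case: Hz. Qed.
Lemma mem_tau_a1 x : (a1 x \in tau) = (x \notin tau). Proof. by case: Hz. Qed.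
Lemma mem_tau_a02 x : (a0 (a2 x) \in tau) = (x \notin tau).
Proof.
rewrite -mem_tau_a1; have -> : a1 x = rho (a2 (a0 x)) by rewrite /rho a2K // a0K.
by rewrite mem_tau_rho a02C.
Qed.
Lemma mem_tau_a0 x : (a0 x \in tau) = (a2 x \notin tau).
Proof. by rewrite -mem_tau_a02 a2K. Qed.

Lemma sameV_xa0F x : sameV x (a0 x) = false. Proof. exact/negbTE/loopless. Qed.
Lemma sameV_a0xF x : sameV (a0 x) x = false. Proof. by rewrite sameV_sym // sameV_xa0F. Qed.
Lemma sameV_xa02F x : sameV x (a0 (a2 x)) = false.
Proof.
apply/negbTE/negP => /sameV_trans V; move: (loopless x).
by rewrite V // sameV_sym //; exact: sameV20.
Qed.
Lemma sameV_a02xF x : sameV (a0 (a2 x)) x = false. Proof. by rewrite sameV_sym // sameV_xa02F. Qed.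
Lemma sameV_a2a0F x : sameV (a2 x) (a0 x) = false.
Proof. by move: (sameV_xa02F (a2 x)); rewrite a2K. Qed.
Lemma sameV_a0a2F x : sameV (a0 x) (a2 x) = false. Proof. by rewrite sameV_sym // sameV_a2a0F. Qed.
Definition sameV_edge_endsF :=
  (sameV_xa0F, sameV_a0xF, sameV_xa02F, sameV_a02xF, sameV_a2a0F, sameV_a0a2F).

Lemma typeII_edgeE x : typeII_edge tau x = ((x \in tau) == (a2 x \in tau)).
Proof.
apply/idP/idP.
- case/existsP=> y /existsP [z /andP [yz /and5P [ty tz xy xz Vyz]]].
  move: (sameE_flags HG xy) (sameE_flags HG xz); rewrite !inE.
  case/or4P=> /eqP Ey; case/or4P => /eqP Ez; subst y z;
    rewrite ?eqxx // ?sameV_edge_endsF in yz Vyz; move: ty tz;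
    rewrite ?mem_tau_a02 ?mem_tau_a0; by case: (x \in tau); case: (a2 x \in tau).
- move=> /eqP E; apply/existsP; case tx: (x \in tau).
  + exists x; apply/existsP; exists (a2 x).
    by rewrite eq_sym a2_neq // tx -E tx sameE2 // sameV2 // sameE_refl.
  + exists (a0 x); apply/existsP; exists (a0 (a2 x)).
    rewrite (inj_eq (a0_inj HG)) eq_sym a2_neq // mem_tau_a0 -E tx mem_tau_a02 tx.
    by rewrite sameE0 // sameE02 // sameV20.
Qed.

Lemma typeI_edgeE x : typeI_edge tau x = ~~ typeII_edge tau x.
Proof.
rewrite typeII_edgeE; apply/idP/idP.
- case/existsP=> y /existsP [z /and5P [ty tz xy xz Vyz]].
  move: (sameE_flags HG xy) (sameE_flags HG xz); rewrite !inE.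
  case/or4P=> /eqP Ey; case/or4P => /eqP Ez; subst y z;
    rewrite ?a0K // ?sameV_edge_endsF in Vyz; move: ty tz;
    rewrite ?mem_tau_a02 ?mem_tau_a0; by case: (x \in tau); case: (a2 x \in tau).
- case tx: (x \in tau); case t2: (a2 x \in tau) => //= _; apply/existsP.
  + exists x; apply/existsP; exists (a0 x).
    by rewrite tx mem_tau_a0 t2 a0K // sameE0 // sameE_refl sameV_refl.
  + exists (a2 x); apply/existsP; exists (a0 (a2 x)).
    by rewrite mem_tau_a02 tx t2 a0K // sameE2 // sameE02 // sameV_refl.
Qed.

Lemma typeII_edge_a0 x : typeII_edge tau (a0 x) = typeII_edge tau x.
Proof.
rewrite !typeII_edgeE mem_tau_a0 -a02C // mem_tau_a02.
by case: (x \in tau); case: (a2 x \in tau).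
Qed.
Lemma typeII_edge_a2 x : typeII_edge tau (a2 x) = typeII_edge tau x.
Proof. by rewrite !typeII_edgeE a2K // eq_sym. Qed.
Lemma typeII_edge_sameE x y : sameE x y -> typeII_edge tau y = typeII_edge tau x.
Proof.
by move/(sameE_flags HG); rewrite !inE => /or4P [] /eqP ->;
  rewrite ?typeII_edge_a0 ?typeII_edge_a2.
Qed.

Lemma typeII_tailE x : typeII_tail tau x = typeII_edge tau x && (x \in tau).
Proof.
rewrite /typeII_tail; case tII: (typeII_edge tau x) => //=.
case tx: (x \in tau); first by apply/existsP; exists x; rewrite tx sameE_refl sameV_refl.
apply/negbTE/existsP => -[y /and3P [ty xy Vxy]].
move: tII; rewrite typeII_edgeE tx eq_sym => /eqP t2.
move: (sameE_flags HG xy); rewrite !inE => /or4P [] /eqP Ey; subst y;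
  by rewrite ?tx ?t2 ?sameV_edge_endsF in ty Vxy.
Qed.

Lemma typeII_vertexE x :
  typeII_vertex tau x = [exists y, sameV x y && typeII_edge tau y].
Proof.
rewrite /typeII_vertex /typeI_vertex negb_forall; apply: eq_existsb => y.
by rewrite typeI_edgeE negb_imply negbK.
Qed.

End ZOrientation.

Section FaceRotation.
Variable G : gmap.
Hypothesis HG : is_gmap G.
Implicit Types x y z u : G.

Definition frot x := a1 (a0 x).

Lemma frot_inj : injective frot.
Proof. by move=> a b /(a1_inj HG) /(a0_inj HG). Qed.

(* a0 reverses the direction of rotation, so it never maps a flag into its own rotation orbit. *)
Lemma a0_iter_frot_neq d : (forall a y, a0 (iter a frot y) != iter (a + d) frot y) /\
                           (forall a y, a0 (iter a frot y) != iter (a + d.+1) frot y).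
Proof.
elim: d => [|d [IH1 IH2]].
  split=> a y; first by rewrite addn0 a0_neq.
  by rewrite addn1 iterS /frot eq_sym a1_neq.
split=> // a y; apply/eqP; rewrite -addSnnS addnS iterS /frot => /(congr1 (@a1 G)).
rewrite a1K // => E; move/eqP: (IH1 a.+1 y); apply.
by rewrite iterS /frot E a0K // addSn.
Qed.

Lemma fconnect_frot_a0 u z : fconnect frot u z -> fconnect frot (a0 z) (a0 u).
Proof.
move=> /iter_findex <-; elim: (findex frot u z) => [|n IHn] /=; first exact: connect0.
apply: connect_trans IHn; apply: connect1.
by rewrite /= /frot a0K // a1K // a0K.
Qed.

Lemma sameF_frot x y : sameF x y = fconnect frot x y || fconnect frot (a0 x) y.
Proof.
have a0_orbit u z : fconnect frot u z -> fconnect frot (a0 u) (a0 z).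
  by move/fconnect_frot_a0; rewrite fconnect_sym //; exact: frot_inj.
apply/idP/idP.
- apply: (connect_invariant (P := fun y => fconnect frot x y || fconnect frot (a0 x) y)).
    by rewrite connect0.
  move=> a b Ha; rewrite /Defs.frel /rel2 => /orP [] /eqP ->.
  + by case/orP: Ha => /a0_orbit; rewrite ?a0K // => ->; rewrite ?orbT.
  + have a1_orbit u : fconnect frot u a -> fconnect frot (a0 u) (a1 a).
      move/a0_orbit/connect_trans; apply.
      by rewrite -[in X in fconnect _ _ X](a0K HG a); exact: fconnect1.
    by case/orP: Ha => /a1_orbit; rewrite ?a0K // => ->; rewrite ?orbT.
- have sub : subrel (frel frot) (connect (@Defs.frel G)).
    by move=> a b /= /eqP <-; apply: sameF_trans (sameF0 a) (sameF1 _).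
  by case/orP => /(connect_sub sub) //; exact: sameF_trans (sameF0 x).
Qed.

Lemma card_face_flags x : #|face_flags x| = (order frot x).*2.
Proof.
pose A := [set y | fconnect frot x y]; pose B := [set y | fconnect frot (a0 x) y].
have -> : face_flags x = A :|: B by apply/setP => y; rewrite !inE sameF_frot.
have AB : A :&: B = set0.
  apply/setP => y; rewrite !inE; apply/negbTE/andP => -[xy ay].
  case: (a0_iter_frot_neq (findex frot x (a0 x))) => /(_ 0 x) + _.
  rewrite /= add0n iter_findex ?eqxx //.
  by apply: connect_trans xy _; rewrite fconnect_sym //; exact: frot_inj.
have BA : B = (@a0 G) @: A.
  apply/setP => y; rewrite !inE; apply/idP/imsetP.
  - move/fconnect_frot_a0; rewrite fconnect_sym ?a0K //; last exact: frot_inj.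
    by move=> xy; exists (a0 y); rewrite ?inE ?a0K.
  - case=> z; rewrite inE => /fconnect_frot_a0 + ->.
    by rewrite fconnect_sym ?a0K //; exact: frot_inj.
rewrite cardsU AB cards0 subn0 BA card_imset; last exact: a0_inj.
by rewrite addnn /order; congr (_.*2); apply: eq_card => y; rewrite inE.
Qed.

Lemma triangle_braid x : #|face_flags (a0 x)| = 6 -> a1 (a0 (a1 x)) = a0 (a1 (a0 x)).
Proof.
rewrite card_face_flags -[6]/(3.*2) => /double_inj order3.
have := iter_order frot_inj (a0 x); rewrite order3 /= /frot a0K //.
by move/(congr1 (@a1 G)); rewrite a1K // => <-; rewrite a0K.
Qed.

End FaceRotation.

Section TriangleFaces.
Variable G : gmap.
Hypothesis HG : is_gmap G.
Hypothesis braid : forall x : G, a1 (a0 (a1 x)) = a0 (a1 (a0 x)).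
Implicit Types x y : G.

Definition triangle_flags x := [:: x; a0 x; a1 x; a0 (a1 x); a1 (a0 x); a0 (a1 (a0 x))].

Lemma sameF_triangle_flags x y : sameF x y = (y \in triangle_flags x).
Proof.
apply/idP/idP.
- apply: (connect_invariant (P := fun y => y \in triangle_flags x)).
    by rewrite inE eqxx.
  move=> a b; rewrite /Defs.frel /rel2 /triangle_flags !inE => Ha /orP [] /eqP ->;
  repeat case/orP: Ha => [/eqP ->|Ha]; try (move/eqP: Ha => ->);
  by rewrite ?(a0K HG) ?(a1K HG) ?braid ?(a0K HG) ?(a1K HG) ?eqxx ?orbT.
- have F0 := @sameF0 G; have F1 := @sameF1 G; have T := @sameF_trans G.
  rewrite /triangle_flags !inE => Fy.
  repeat case/orP: Fy => [/eqP ->|Fy]; try (move/eqP: Fy => ->).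
  + exact: sameF_refl.
  + exact: F0.
  + exact: F1.
  + exact: T (F1 _) (F0 _).
  + exact: T (F0 _) (F1 _).
  + exact: T _ _ _ (T _ _ _ (F0 x) (F1 (a0 x))) (F0 _).
Qed.

End TriangleFaces.

Lemma ord3P (i : 'I_3) : [\/ i = i0, i = i1 | i = i2].
Proof.
by case: i => [[|[|[|n]]] Hi] //; [constructor 1|constructor 2|constructor 3]; exact: val_inj.
Qed.

Section TConstruction.
Variable H : gmap.
Hypothesis HH : is_gmap H.
Notation T := (Tmap H).

Lemma Tmap_a0_0 x : a0 ((x, i0) : T) = (a0 x, i0). Proof. by []. Qed.
Lemma Tmap_a0_1 x : a0 ((x, i1) : T) = (x, i2). Proof. by []. Qed.
Lemma Tmap_a0_2 x : a0 ((x, i2) : T) = (x, i1). Proof. by []. Qed.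
Lemma Tmap_a1_0 x : a1 ((x, i0) : T) = (x, i1). Proof. by []. Qed.
Lemma Tmap_a1_1 x : a1 ((x, i1) : T) = (x, i0). Proof. by []. Qed.
Lemma Tmap_a1_2 x : a1 ((x, i2) : T) = (a0 x, i2). Proof. by []. Qed.
Lemma Tmap_a2_0 x : a2 ((x, i0) : T) = (a2 x, i0). Proof. by []. Qed.
Lemma Tmap_a2_1 x : a2 ((x, i1) : T) = (a1 x, i1). Proof. by []. Qed.
Lemma Tmap_a2_2 x : a2 ((x, i2) : T) = (a1 x, i2). Proof. by []. Qed.
Definition TmapE := (Tmap_a0_0, Tmap_a0_1, Tmap_a0_2, Tmap_a1_0, Tmap_a1_1, Tmap_a1_2,
                     Tmap_a2_0, Tmap_a2_1, Tmap_a2_2).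

Lemma Tmap_is_gmap : is_gmap T.
Proof.
have K0 := a0K HH; have K1 := a1K HH; have K2 := a2K HH.
split; [|split; [|split; [|split; [|split; [|split; [|split]]]]]];
  case=> x i; case: (ord3P i) => ->; rewrite !TmapE ?K0 ?K1 ?K2 //;
  rewrite ?xpair_eqE -?val_eqE ?eqxx ?andbF ?andbT //=;
  by [exact: (a0_neq HH) | exact: (a1_neq HH) | exact: (a2_neq HH) | rewrite a02C |
      exact: (a02_neq HH)].
Qed.

Lemma Tmap_braid (p : T) : a1 (a0 (a1 p)) = a0 (a1 (a0 p)).
Proof. by case: p => x i; case: (ord3P i) => ->; rewrite !TmapE. Qed.

Lemma Tmap_rho1 x : rho ((x, i1) : T) = (a0 (a1 x), i2). Proof. by []. Qed.

Lemma Tmap_rho_idx k (p : T) : nat_of_ord (iter k (@rho T) p).2 = (p.2 + k) %% 3.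
Proof.
elim: k p => [|k IHk] p /=; first by rewrite addn0 modn_small.
have -> : forall q : T, nat_of_ord (rho q).2 = (q.2 + 1) %% 3.
  by case=> x i; case: (ord3P i) => ->.
by rewrite IHk modnDml -addnA addn1.
Qed.

(* Invariants of the vertex and of the edge of a flag of T(H): the face of H at whose
   centre it lies or else its vertex of H; the edge of H it lies on or else the vertex
   of H where its spoke ends. *)
Definition Tvertex_tag (p : T) : bool * H :=
  if nat_of_ord p.2 == 2 then (true, root (@Defs.frel H) p.1) else (false, root (@vrel H) p.1).
Definition Tedge_tag (p : T) : bool * H :=
  if nat_of_ord p.2 == 0 then (true, root (@erel H) p.1) else (false, root (@vrel H) p.1).

Lemma Tvertex_tag_sameV (p q : T) : sameV p q -> Tvertex_tag q = Tvertex_tag p.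
Proof.
move=> pq; apply/eqP; move: pq.
apply: (connect_invariant (P := fun q => Tvertex_tag q == Tvertex_tag p)) => //.
move=> a b /eqP <-; rewrite /vrel/rel2 => /orP [] /eqP ->; apply/eqP;
case: a => x i; case: (ord3P i) => ->; rewrite !TmapE /Tvertex_tag //=; congr pair;
first [apply/(rootP (symF HH)); rewrite -/(sameF _ _) sameF_sym //; first [exact: sameF0 | exact: sameF1]
      | apply/(rootP (symV HH)); rewrite -/(sameV _ _) sameV_sym //; first [exact: sameV1 | exact: sameV2]].
Qed.

Lemma Tedge_tag_sameE (p q : T) : sameE p q -> Tedge_tag q = Tedge_tag p.
Proof.
move=> pq; apply/eqP; move: pq.
apply: (connect_invariant (P := fun q => Tedge_tag q == Tedge_tag p)) => //.
move=> a b /eqP <-; rewrite /erel/rel2 => /orP [] /eqP ->; apply/eqP;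
case: a => x i; case: (ord3P i) => ->; rewrite !TmapE /Tedge_tag //=; congr pair;
first [apply/(rootP (symE HH)); rewrite -/(sameE _ _) sameE_sym //; first [exact: sameE0 | exact: sameE2]
      | apply/(rootP (symV HH)); rewrite -/(sameV _ _) sameV_sym //; first [exact: sameV1 | exact: sameV2]].
Qed.

End TConstruction.

Lemma typeI_face_sameF (G : gmap) (tau : {set G}) (p q : G) :
  is_gmap G -> sameF p q -> typeI_face tau q = typeI_face tau p.
Proof.
move=> HG pq; have Fpq : sameF p =1 sameF q by apply: same_connect => //; exact: symF.
have K (P : pred G) : [set root (@erel G) y | y in [pred y | sameF q y && P y]] =
                      [set root (@erel G) y | y in [pred y | sameF p y && P y]].
  by apply: eq_imset_dom => y; rewrite !inE Fpq.
by rewrite /typeI_face !K.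
Qed.

Section DirectedEmbeddingToTriangulation.
Variables (H : gmap) (tl : pred H).
Hypothesis Hgood : good_directed_embedding tl.
Notation T := (Tmap H).
Implicit Types x : H.

Let HH : is_gmap H. Proof. by case: Hgood. Qed.
Let H_loopless x : ~~ sameV x (a0 x). Proof. by case: Hgood => _ [_ [[/(_ x) ? _] _]]. Qed.
Let tl_a2 x : tl (a2 x) = tl x. Proof. by case: Hgood => _ [_ [_ [_ [/(_ x) []]]]]. Qed.
Let tl_a0 x : tl (a0 x) = ~~ tl x. Proof. by case: Hgood => _ [_ [_ [_ [/(_ x) []]]]]. Qed.
Let tl_a1 x : tl (a1 x) = ~~ tl x. Proof. by case: Hgood => _ [_ [_ [_ [_ [_ ]]]]]. Qed.
Let TG : is_gmap T. Proof. exact: Tmap_is_gmap HH. Qed.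

Lemma Tmap_loopless (p : T) : ~~ sameV p (a0 p).
Proof.
apply/negP => /Tvertex_tag_sameV; case: p => x i; case: (ord3P i) => ->;
  rewrite !TmapE /Tvertex_tag //= => /(_ HH) // [] /esym /(rootP (symV HH)).
all: exact/negP/H_loopless.
Qed.

(* The directed zigzags of T(H) that traverse the edges of H in their direction. *)
Definition Ttau : {set T} := [set p : T | if nat_of_ord p.2 == 0 then tl p.1 else ~~ tl p.1].

Lemma mem_Ttau x i : (((x, i) : T) \in Ttau) = if nat_of_ord i == 0 then tl x else ~~ tl x.
Proof. by rewrite inE. Qed.

Lemma Ttau_z_orientation : z_orientation Ttau.
Proof.
by split=> -[x i]; case: (ord3P i) => ->;
  rewrite /rho !TmapE !mem_Ttau /= ?tl_a0 ?tl_a1 ?tl_a2 ?negbK.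
Qed.

Lemma Ttau_typeII_edge (p : T) : typeII_edge Ttau p = (nat_of_ord p.2 == 0).
Proof.
rewrite (typeII_edgeE TG Ttau_z_orientation Tmap_loopless).
by case: p => x i; case: (ord3P i) => ->; rewrite !TmapE !mem_Ttau /= ?tl_a1 ?tl_a2;
  case: (tl x).
Qed.

Lemma Ttau_homogeneous (p : T) : homogeneous Ttau p.
Proof.
pose y := iter ((3 - p.2) %% 3) (@rho T) p.
have y0 : nat_of_ord y.2 = 0.
  by rewrite Tmap_rho_idx; case: p.2 => -[|[|[|n]]].
exists y; split; first exact: fconnect_iter.
by move=> k; rewrite Ttau_typeII_edge Tmap_rho_idx y0.
Qed.

Lemma Ttau_typeII_vertex (p : T) : typeII_vertex Ttau p = (nat_of_ord p.2 != 2).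
Proof.
rewrite (typeII_vertexE TG Ttau_z_orientation Tmap_loopless).
case: p => x i; case: (ord3P i) => -> /=.
- by apply/existsP; exists (x, i0); rewrite Ttau_typeII_edge andbT sameV_refl.
- by apply/existsP; exists (x, i0); rewrite Ttau_typeII_edge andbT -Tmap_a1_1 sameV1.
- apply/negbTE/existsP => -[[y j] /andP [/Tvertex_tag_sameV]].
  by rewrite Ttau_typeII_edge; case: (ord3P j) => -> //= /(_ HH); rewrite /Tvertex_tag.
Qed.

Lemma Ttau_typeII_tail x : typeII_tail Ttau ((x, i0) : T) = tl x.
Proof.
by rewrite (typeII_tailE TG Ttau_z_orientation Tmap_loopless) Ttau_typeII_edge mem_Ttau.
Qed.

Let Tmap_sameF (p q : T) : sameF p q = (q \in triangle_flags p).
Proof. exact: sameF_triangle_flags TG (@Tmap_braid H) p q. Qed.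

Lemma Ttau_face_typeI_edges x :
  [set root (@erel T) y | y in [pred y | sameF ((x, i0) : T) y && typeI_edge Ttau y]] =
  [set root (@erel T) ((x, i1) : T); root (@erel T) ((a0 x, i1) : T)].
Proof.
apply/setP=> u; apply/imsetP/set2P.
- case=> y; rewrite inE Tmap_sameF => /andP [].
  rewrite (typeI_edgeE TG Ttau_z_orientation Tmap_loopless) Ttau_typeII_edge.
  rewrite /triangle_flags !TmapE !inE => Fy tIy ->.
  repeat case/orP: Fy => [/eqP Ey|Fy]; try (move/eqP: Fy => Ey); subst y => //; auto;
  [left|right]; apply/(rootP (symE TG)); exact: sameE0.
- case=> ->; [exists ((x, i1) : T) | exists ((a0 x, i1) : T)] => //;
  rewrite inE (typeI_edgeE TG Ttau_z_orientation Tmap_loopless) Ttau_typeII_edge andbT;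
  by rewrite Tmap_sameF /triangle_flags !TmapE !inE eqxx ?orbT.
Qed.

Lemma Ttau_face_typeII_edges x :
  [set root (@erel T) y | y in [pred y | sameF ((x, i0) : T) y && typeII_edge Ttau y]] =
  [set root (@erel T) ((x, i0) : T)].
Proof.
apply/setP=> u; apply/imsetP/set1P.
- case=> y; rewrite inE Tmap_sameF Ttau_typeII_edge /triangle_flags !TmapE !inE.
  case/andP=> Fy tIIy ->.
  repeat case/orP: Fy => [/eqP Ey|Fy]; try (move/eqP: Fy => Ey); subst y => //.
  by apply/(rootP (symE TG)); rewrite -/(sameE _ _) sameE_sym //; exact: sameE0.
- by move=> ->; exists ((x, i0) : T); rewrite // inE Ttau_typeII_edge andbT sameF_refl.
Qed.

Lemma Ttau_typeI_face (p : T) : typeI_face Ttau p.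
Proof.
case: p => x i.
have -> : typeI_face Ttau (x, i) = typeI_face Ttau ((x, i0) : T).
  apply: typeI_face_sameF TG _; rewrite Tmap_sameF.
  by case: (ord3P i) => ->; rewrite /triangle_flags !TmapE !inE eqxx ?orbT.
rewrite /typeI_face Ttau_face_typeI_edges Ttau_face_typeII_edges cards1 cards2 eqxx andbT.
rewrite eqSS eqb1; apply/negP => /eqP /(rootP (symE TG)) /Tedge_tag_sameE.
rewrite /Tedge_tag /= => /(_ HH) [] /esym /(rootP (symV HH)).
exact/negP/H_loopless.
Qed.

Lemma Ttau_unique (tau : {set T}) : z_orientation tau ->
  (forall p, typeII_edge tau p = (nat_of_ord p.2 == 0)) ->
  (forall x, typeII_tail tau ((x, i0) : T) = tl x) -> tau = Ttau.
Proof.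
move=> Hz tauII tau_tail.
have mem_tau0 x : (((x, i0) : T) \in tau) = tl x.
  by rewrite -tau_tail (typeII_tailE TG Hz Tmap_loopless) tauII.
apply/setP => -[x i]; rewrite mem_Ttau; case: (ord3P i) => -> /=.
- by rewrite mem_tau0.
- by rewrite -Tmap_a1_0 (mem_tau_a1 Hz) mem_tau0.
- have -> : ((x, i2) : T) = rho ((a1 (a0 x), i1) : T) by rewrite Tmap_rho1 a1K ?a0K.
  by rewrite (mem_tau_rho Hz) -Tmap_a1_0 (mem_tau_a1 Hz) mem_tau0 tl_a1 tl_a0 negbK.
Qed.

End DirectedEmbeddingToTriangulation.

Section TypeIISubgraph.
Variables (G : gmap) (tau : {set G}).
Hypothesis Htri : triangulation G.
Hypothesis Hz : z_orientation tau.
Hypothesis Hface : forall x : G, typeI_face tau x.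
Hypothesis Hhom : forall x : G, x \in tau -> homogeneous tau x.
Implicit Types x y z q : G.

Let HG : is_gmap G. Proof. by case: Htri. Qed.
Let G_loopless x : ~~ sameV x (a0 x). Proof. by case: Htri => _ _ [] /(_ x). Qed.
Let sameV_ends_sameE x y : sameV x y -> sameV (a0 x) (a0 y) -> sameE x y.
Proof. by case: Htri => _ _ [_ ends_sameE] _; exact: ends_sameE. Qed.
Let braid x : a1 (a0 (a1 x)) = a0 (a1 (a0 x)).
Proof. by case: Htri => _ _ _ /(_ (a0 x)) /(triangle_braid HG). Qed.

Notation tII := (typeII_edge tau).
Let tIIE x : tII x = ((x \in tau) == (a2 x \in tau)).
Proof. exact: typeII_edgeE. Qed.
Let tIE x : typeI_edge tau x = ~~ tII x. Proof. exact: typeI_edgeE. Qed.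
Let tII_a0 x : tII (a0 x) = tII x. Proof. exact: typeII_edge_a0. Qed.
Let tII_a2 x : tII (a2 x) = tII x. Proof. exact: typeII_edge_a2. Qed.
Let tII_a20 x : tII (a2 (a0 x)) = tII x. Proof. by rewrite tII_a2 tII_a0. Qed.

Lemma typeII_face_others x : tII x -> ~~ tII (a1 x) /\ ~~ tII (a1 (a0 x)).
Proof.
move=> tIIx; move: (Hface x) => /andP [/eqP cardI _].
set I := [set _ | _ in _] in cardI.
pose ra := root (@erel G) (a1 x); pose rb := root (@erel G) (a1 (a0 x)).
have subI : I \subset [set ra; rb].
  apply/subsetP => u /imsetP [y]; rewrite inE (sameF_triangle_flags HG braid) tIE.
  rewrite /triangle_flags !inE => /andP [Fy tIy] ->.
  repeat case/orP: Fy => [/eqP Ey|Fy]; try (move/eqP: Fy => Ey); subst y.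
  - by rewrite tIIx in tIy.
  - by rewrite tII_a0 tIIx in tIy.
  - by rewrite /ra eqxx.
  - by rewrite /ra -(sameE_root HG (sameE0 _)) eqxx.
  - by rewrite /rb eqxx orbT.
  - by rewrite /rb -(sameE_root HG (sameE0 _)) eqxx orbT.
have defI : I = [set ra; rb].
  by apply/eqP; rewrite eqEcard subI cards2 cardI; case: (ra != rb).
have typeI_of w : root (@erel G) w \in I -> ~~ tII w.
  case/imsetP => y; rewrite inE tIE => /andP [_ tIy].
  by move/esym/(rootP (symE HG)) /(typeII_edge_sameE HG Hz G_loopless) ->.
by split; apply: typeI_of; rewrite defI !inE eqxx ?orbT.
Qed.

Lemma face_has_typeII x : [|| tII x, tII (a1 x) | tII (a1 (a0 x))].
Proof.
move: (Hface x) => /andP [_ /eqP cardII].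
have : [set root (@erel G) y | y in [pred y | sameF x y && tII y]] != set0.
  by rewrite -card_gt0 cardII.
case/set0Pn => u /imsetP [y]; rewrite inE (sameF_triangle_flags HG braid).
rewrite /triangle_flags !inE => /andP [Fy tIIy] _.
repeat case/orP: Fy => [/eqP Ey|Fy]; try (move/eqP: Fy => Ey); subst y;
  by rewrite ?tII_a0 in tIIy; rewrite tIIy ?orbT.
Qed.

Lemma homogeneous_typeII_rho2 q : q \in tau ->
  tII (rho (rho q)) = ~~ tII q && ~~ tII (rho q).
Proof.
case/Hhom => y [qy IIy].
have rho_inj : injective (@rho G).
  by move=> a b /(a1_inj HG) /(a0_inj HG) /(a2_inj HG).
have <- : iter (findex (@rho G) y q) (@rho G) y = q by rewrite iter_findex // fconnect_sym.
by rewrite -!iterS !IIy; lia.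
Qed.

Lemma rho_inv x : rho (a2 (a0 (a1 x))) = x.
Proof. by rewrite /rho a2K // a0K // a1K. Qed.

Lemma mem_tau_rho_inv x : (a2 (a0 (a1 x)) \in tau) = (x \in tau).
Proof. by rewrite -{2}(rho_inv x) (mem_tau_rho Hz). Qed.

(* From the type II edge of x, across the spoke a1 x, to the other edge of the
   neighbouring triangle at the same vertex. *)
Definition vturn x := a1 (a2 (a1 x)).

Lemma typeII_vturn x : tII x -> tII (vturn x).
Proof.
move=> tIIx; case: (typeII_face_others tIIx) => tI1 tI10.
pose y := a0 (a1 x).
have tIy : ~~ tII y by rewrite /y tII_a0.
have tIa1y : ~~ tII (a1 y) by rewrite /y braid tII_a0.
have -> : vturn x = rho y by rewrite /rho /y (a020 HG).
case ty: (y \in tau).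
- pose q := a2 (a0 (a1 y)).
  have <- : rho q = y by exact: rho_inv.
  rewrite homogeneous_typeII_rho2; last by rewrite mem_tau_rho_inv.
  by rewrite rho_inv tIy /q tII_a20 tIa1y.
- pose p := a2 (a0 (a1 (a1 y))); pose p' := a2 (a0 (a1 p)).
  have tp' : p' \in tau by rewrite !mem_tau_rho_inv (mem_tau_a1 Hz) ty.
  move: (homogeneous_typeII_rho2 tp'); rewrite !rho_inv.
  have -> : tII p = tII y by rewrite /p (a1K HG) tII_a20.
  have -> : tII p' = tII (rho y) by rewrite /p' tII_a20 /p (a1K HG) /rho (a02C HG).
  by rewrite (negbTE tIa1y) tIy andbT => /esym /negbFE.
Qed.

(* The vertex of z is the apex of its triangle, i.e. it lies opposite the type II edge. *)
Definition at_apex z := tII (a1 (a0 z)).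

Lemma at_apex_a1 z : at_apex (a1 z) = at_apex z.
Proof. by rewrite /at_apex braid tII_a0. Qed.

Lemma at_apex_a2 z : at_apex z -> at_apex (a2 z).
Proof.
rewrite /at_apex => /typeII_vturn; congr (tII (a1 _)).
by rewrite (a1K HG) (a02C HG).
Qed.

Lemma at_apex_sameV z z' : at_apex z -> sameV z z' -> at_apex z'.
Proof.
move=> apz; apply: (connect_invariant (P := at_apex)) => // a b apa.
by rewrite /vrel/rel2 => /orP [] /eqP ->; [rewrite at_apex_a1 | exact: at_apex_a2].
Qed.

Lemma at_apex_typeI z : at_apex z -> ~~ tII z.
Proof. by rewrite /at_apex => /typeII_face_others []; rewrite (a1K HG) tII_a0. Qed.

Lemma typeII_at_apex x : tII x -> at_apex (a0 (a1 x)).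
Proof. by rewrite /at_apex (a0K HG) (a1K HG). Qed.

Lemma at_apex_typeII_vertex z : at_apex z -> typeII_vertex tau z = false.
Proof.
move=> apz; rewrite (typeII_vertexE HG Hz G_loopless).
apply/negbTE/existsP => -[y /andP [zy]].
by rewrite (negbTE (at_apex_typeI (at_apex_sameV apz zy))).
Qed.

Lemma typeII_not_sameV_apex y y' : tII y -> tII y' -> ~~ sameV (a0 (a1 y)) y'.
Proof.
by move=> tIIy tIIy'; apply/negP => /(at_apex_sameV (typeII_at_apex tIIy)) /at_apex_typeI;
  rewrite tIIy'.
Qed.

Lemma mem_tau_vturn x : tII x -> (vturn x \in tau) = (x \notin tau).
Proof.
case/typeII_face_others => + _; rewrite /vturn tIIE !(mem_tau_a1 Hz).
by case: (x \in tau); case: (a2 (a1 x) \in tau).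
Qed.

Lemma typeII_sameV_apex y y' : tII y -> tII y' ->
  sameV y y' -> sameV (a0 (a1 y)) (a0 (a1 y')) -> y' = y \/ y' = vturn y.
Proof.
move=> tIIy tIIy' V V0; have apex_y' := typeII_not_sameV_apex tIIy tIIy'.
have V1 : sameV (a1 y) (a1 y').
  apply: (sameV_trans _ (sameV1 y')); apply: (sameV_trans _ V).
  by rewrite sameV_sym // sameV1.
have V_y' w : a1 y' = w -> sameV w y' by move=> <-; rewrite sameV_sym // sameV1.
move: (sameE_flags HG (sameV_ends_sameE V1 V0)); rewrite !inE => /or4P [] /eqP E.
- by left; apply: (a1_inj HG).
- by rewrite (V_y' _ E) in apex_y'.
- by right; rewrite /vturn -E (a1K HG).
- by rewrite (sameV_trans (sameV20 HG _) (V_y' _ E)) in apex_y'.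
Qed.

Lemma typeII_apexes_distinct y : tII y -> ~~ sameV (a0 (a1 y)) (a0 (a1 (a2 y))).
Proof.
move=> tIIy; apply/negP => V0; have apex_y := typeII_not_sameV_apex tIIy tIIy.
have V1 : sameV (a1 y) (a1 (a2 y)).
  apply: (sameV_trans _ (sameV1 _)); apply: (sameV_trans _ (sameV2 y)).
  by rewrite sameV_sym // sameV1.
have V_y w : a1 (a2 y) = w -> sameV w y.
  by move=> <-; rewrite sameV_sym //; apply: sameV_trans (sameV2 y) (sameV1 _).
move: (sameE_flags HG (sameV_ends_sameE V1 V0)); rewrite !inE => /or4P [] /eqP E.
- by move: (a2_neq HG y); rewrite (a1_inj HG E) eqxx.
- by rewrite (V_y _ E) in apex_y.
- move: (mem_tau_vturn tIIy); rewrite /vturn -E (a1K HG).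
  by move: tIIy; rewrite tIIE => /eqP <-; case: (y \in tau).
- by rewrite (sameV_trans (sameV20 HG _) (V_y _ E)) in apex_y.
Qed.

Definition IIdart : finType := {x : G | tII x}.

Lemma IIdart_a0P (x : IIdart) : tII (a0 (val x)). Proof. by rewrite tII_a0 (valP x). Qed.
Lemma IIdart_a1P (x : IIdart) : tII (vturn (val x)). Proof. exact: typeII_vturn (valP x). Qed.
Lemma IIdart_a2P (x : IIdart) : tII (a2 (val x)). Proof. by rewrite tII_a2 (valP x). Qed.

Definition IIdart_a0 (x : IIdart) : IIdart := exist _ (a0 (val x)) (IIdart_a0P x).
Definition IIdart_a1 (x : IIdart) : IIdart := exist _ (vturn (val x)) (IIdart_a1P x).
Definition IIdart_a2 (x : IIdart) : IIdart := exist _ (a2 (val x)) (IIdart_a2P x).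
(* The subgraph of type II edges, embedded in the same surface. *)
Definition IImap : gmap := GMap IIdart_a0 IIdart_a1 IIdart_a2.

Lemma val_IImap_a0 (x : IImap) : val (a0 x) = a0 (val x). Proof. by []. Qed.
Lemma val_IImap_a1 (x : IImap) : val (a1 x) = vturn (val x). Proof. by []. Qed.
Lemma val_IImap_a2 (x : IImap) : val (a2 x) = a2 (val x). Proof. by []. Qed.
Definition val_IImapE := (val_IImap_a0, val_IImap_a1, val_IImap_a2).

Lemma IImap_val_inj : injective (val : IImap -> G). Proof. exact: val_inj. Qed.

Lemma IImap_is_gmap : is_gmap IImap.
Proof.
have K0 := a0K HG; have K1 := a1K HG; have K2 := a2K HG.
split; [|split; [|split; [|split; [|split; [|split; [|split]]]]]] => x.
- by apply: IImap_val_inj; rewrite !val_IImapE K0.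
- by apply: IImap_val_inj; rewrite !val_IImapE /vturn K1 K2 K1.
- by apply: IImap_val_inj; rewrite !val_IImapE K2.
- by apply/eqP => /(congr1 val); rewrite val_IImapE; apply/eqP; exact: a0_neq.
- apply/eqP => /(congr1 val); rewrite val_IImapE /vturn => /(congr1 (@a1 G)).
  by rewrite K1 => E; move: (a2_neq HG (a1 (val x))); rewrite E eqxx.
- by apply/eqP => /(congr1 val); rewrite val_IImapE; apply/eqP; exact: a2_neq.
- by apply: IImap_val_inj; rewrite !val_IImapE (a02C HG).
- by apply/eqP => /(congr1 val); rewrite !val_IImapE; apply/eqP; exact: a02_neq.
Qed.

Lemma sameV_val (x y : IImap) : sameV x y -> sameV (val x) (val y).
Proof.
apply: homo_connect => a b; rewrite /vrel/rel2 => /orP [] /eqP ->; rewrite val_IImapE.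
- by apply: sameV_trans (sameV1 _) _; apply: sameV_trans (sameV2 _) (sameV1 _).
- exact: sameV2.
Qed.

Lemma sameE_val (x y : IImap) : sameE x y -> sameE (val x) (val y).
Proof.
apply: homo_connect => a b; rewrite /erel/rel2 => /orP [] /eqP ->; rewrite val_IImapE.
- exact: sameE0.
- exact: sameE2.
Qed.

(* A face of IImap is the link of one apex vertex of G. *)
Lemma sameF_apex (u v : IImap) : sameF u v -> sameV (a0 (a1 (val u))) (a0 (a1 (val v))).
Proof.
apply: (homo_connect (f := fun w : IImap => a0 (a1 (val w)))) => a b.
rewrite /Defs.frel/rel2 => /orP [] /eqP ->; rewrite val_IImapE.
- by rewrite -braid; exact: sameV1.
- by rewrite /vturn (a1K HG) (a02C HG); exact: sameV2.
Qed.

Lemma IImap_simple : simple_gmap IImap.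
Proof.
split=> [x | x y /sameV_val V /sameV_val].
  by apply/negP => /sameV_val; rewrite val_IImapE; apply/negP; exact: G_loopless.
rewrite !val_IImapE => /(sameV_ends_sameE V) /(sameE_flags HG).
rewrite !inE -!val_IImapE => /or4P [] /eqP /IImap_val_inj ->.
- exact: sameE_refl.
- exact: sameE0.
- exact: sameE2.
- exact: sameE02.
Qed.

Lemma IImap_face_vertices (x : IImap) : (#|face_vertices x|).*2 = #|face_flags x|.
Proof.
have HG' := IImap_is_gmap.
symmetry; apply: (card_imset_2to1 (s := @a1 IImap)).
- by move=> y; rewrite !inE => Fy; apply: sameF_trans Fy (sameF1 _).
- exact: a1_neq.
- move=> y y'; rewrite !inE => Fy Fy'; apply/idP/idP.
  + move/eqP/esym/(rootP (symV HG')) => V.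
    have V0 : sameV (a0 (a1 (val y))) (a0 (a1 (val y'))).
      by apply: sameV_trans (sameF_apex Fy'); rewrite sameV_sym //; exact: sameF_apex.
    case: (typeII_sameV_apex (valP y) (valP y') (sameV_val V) V0); rewrite -?val_IImapE.
    * by move/IImap_val_inj ->; rewrite eqxx.
    * by move/IImap_val_inj ->; rewrite eqxx orbT.
  + case/orP => /eqP ->; apply/eqP/(rootP (symV HG')); first exact: sameV_refl.
    by rewrite -/(sameV _ _) sameV_sym // sameV1.
Qed.

Lemma IImap_face_edges (x : IImap) : (#|face_edges x|).*2 = #|face_flags x|.
Proof.
have HG' := IImap_is_gmap.
symmetry; apply: (card_imset_2to1 (s := @a0 IImap)).
- by move=> y; rewrite !inE => Fy; apply: sameF_trans Fy (sameF0 _).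
- exact: a0_neq.
- move=> y y'; rewrite !inE => Fy Fy'; apply/idP/idP.
  + move/eqP/esym/(rootP (symE HG')) => /sameE_val /(sameE_flags HG).
    have Fyy' : sameF y y' by apply: sameF_trans Fy'; rewrite sameF_sym.
    rewrite !inE -!val_IImapE => /or4P [] /eqP /IImap_val_inj Ey'.
    * by rewrite Ey' eqxx.
    * by rewrite Ey' eqxx orbT.
    * move: (sameF_apex Fyy'); rewrite Ey' val_IImapE.
      by rewrite (negbTE (typeII_apexes_distinct (valP y))).
    * have Fy0y' : sameF (a0 y) y' by apply: sameF_trans Fyy'; rewrite sameF_sym // sameF0.
      move: (sameF_apex Fy0y'); rewrite Ey' !val_IImapE (a02C HG).
      by rewrite (negbTE (typeII_apexes_distinct (IIdart_a0P y))).
  + case/orP => /eqP ->; apply/eqP/(rootP (symE HG')); first exact: sameE_refl.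
    by rewrite -/(sameE _ _) sameE_sym // sameE0.
Qed.

Definition IItail : pred IImap := fun u => val u \in tau.

Lemma IItail_a2 (x : IImap) : IItail (a2 x) = IItail x.
Proof. by rewrite /IItail val_IImapE; move: (valP x); rewrite tIIE => /eqP ->. Qed.
Lemma IItail_a0 (x : IImap) : IItail (a0 x) = ~~ IItail x.
Proof. by rewrite /IItail val_IImapE (mem_tau_a0 HG Hz) -val_IImap_a2 -/(IItail _) IItail_a2. Qed.
Lemma IItail_a1 (x : IImap) : IItail (a1 x) = ~~ IItail x.
Proof. exact: mem_tau_vturn (valP x). Qed.

Lemma card_IItail_at (x : IImap) (b : bool) :
  #|[set y : IImap | sameV x y && (IItail y == b)]| =
  (#|root (@erel IImap) @: [set y : IImap | sameV x y && (IItail y == b)]|).*2.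
Proof.
have HG' := IImap_is_gmap.
apply: (card_imset_2to1 (s := @a2 IImap)).
- move=> y; rewrite !inE IItail_a2 => /andP [V ->]; rewrite andbT.
  exact: sameV_trans V (sameV2 _).
- exact: a2_neq.
- move=> y y'; rewrite !inE => /andP [_ /eqP ty] /andP [_ /eqP ty']; apply/idP/idP.
  + move/eqP/esym/(rootP (symE HG')) => /sameE_val /(sameE_flags HG).
    rewrite !inE -!val_IImapE => /or4P [] /eqP /IImap_val_inj Ey'.
    * by rewrite Ey' eqxx.
    * by move: ty'; rewrite Ey' IItail_a0 ty; case: b {ty}.
    * by rewrite Ey' eqxx orbT.
    * by move: ty'; rewrite Ey' IItail_a0 IItail_a2 ty; case: b {ty}.
  + case/orP => /eqP ->; apply/eqP/(rootP (symE HG')); first exact: sameE_refl.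
    by rewrite -/(sameE _ _) sameE_sym // sameE2.
Qed.

Lemma IImap_eulerian : eulerian IItail.
Proof.
have HG' := IImap_is_gmap.
move=> x; set S := fun b => [set y : IImap | sameV x y && (IItail y == b)].
have -> : [set root (@erel IImap) y | y in [pred y | sameV x y && IItail y]] =
          root (@erel IImap) @: S true by apply: eq_imset_dom => y; rewrite !inE eqb_id.
have -> : [set root (@erel IImap) y | y in [pred y | sameV x y && ~~ IItail y]] =
          root (@erel IImap) @: S false by apply: eq_imset_dom => y; rewrite !inE eqbF_neg.
apply: double_inj; rewrite -!card_IItail_at -/(S true) -/(S false).
have -> : S false = (@a1 IImap) @: S true.
  apply/setP => y; apply/idP/imsetP.
  - rewrite inE => /andP [V ty]; exists (a1 y); last by rewrite a1K.
    by rewrite inE IItail_a1 (eqP ty) eqxx andbT; apply: sameV_trans V (sameV1 _).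
  - case=> z; rewrite !inE => /andP [V tz] ->; rewrite IItail_a1 (eqP tz) eqxx andbT.
    exact: sameV_trans V (sameV1 _).
by rewrite card_imset //; exact: a1_inj.
Qed.

Definition Tiso (p : Tmap IImap) : G :=
  match nat_of_ord p.2 with 0 => val p.1 | 1 => a1 (val p.1) | _ => a0 (a1 (val p.1)) end.

Lemma Tiso0 (x : IImap) : Tiso (x, i0) = val x. Proof. by []. Qed.
Lemma Tiso1 (x : IImap) : Tiso (x, i1) = a1 (val x). Proof. by []. Qed.
Lemma Tiso2 (x : IImap) : Tiso (x, i2) = a0 (a1 (val x)). Proof. by []. Qed.
Definition TisoE := (Tiso0, Tiso1, Tiso2).

Lemma Tiso_a0 (p : Tmap IImap) : Tiso (a0 p) = a0 (Tiso p).
Proof. by case: p => x i; case: (ord3P i) => ->; rewrite !TmapE !TisoE ?(a0K HG). Qed.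

Lemma Tiso_a1 (p : Tmap IImap) : Tiso (a1 p) = a1 (Tiso p).
Proof. by case: p => x i; case: (ord3P i) => ->; rewrite !TmapE !TisoE ?(a1K HG) ?braid. Qed.

Lemma Tiso_a2 (p : Tmap IImap) : Tiso (a2 p) = a2 (Tiso p).
Proof.
by case: p => x i; case: (ord3P i) => ->; rewrite !TmapE !TisoE !val_IImapE /vturn ?(a1K HG)
  ?(a02C HG).
Qed.

Lemma Tiso_inj : injective Tiso.
Proof.
have tI1 (x : IImap) : ~~ tII (Tiso (x, i1)).
  by case: (typeII_face_others (valP x)).
have tI2 (x : IImap) : ~~ tII (Tiso (x, i2)).
  by rewrite Tiso2 tII_a0; case: (typeII_face_others (valP x)).
have apex2 (x y : IImap) : Tiso (x, i1) <> Tiso (y, i2).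
  move=> E; move: (typeII_at_apex (valP y)); rewrite -Tiso2 -E Tiso1 at_apex_a1.
  by move/at_apex_typeI; rewrite (valP x).
case=> x i [y j]; case: (ord3P i) => ->; case: (ord3P j) => -> E.
- by rewrite !Tiso0 in E; rewrite (IImap_val_inj E).
- by move: (tI1 y); rewrite -E (valP x).
- by move: (tI2 y); rewrite -E (valP x).
- by move: (tI1 x); rewrite E (valP y).
- by rewrite !Tiso1 in E; rewrite (IImap_val_inj (a1_inj HG E)).
- by case: (apex2 _ _ E).
- by move: (tI2 x); rewrite E (valP y).
- by case: (apex2 _ _ (esym E)).
- by rewrite !Tiso2 in E; rewrite (IImap_val_inj (a1_inj HG (a0_inj HG E))).
Qed.

Lemma Tiso_surj z : exists p, Tiso p = z.
Proof.
case t0: (tII z); first by exists ((exist _ z t0 : IIdart) : IImap, i0).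
case t1: (tII (a1 z)).
  by exists ((exist _ (a1 z) t1 : IIdart) : IImap, i1); rewrite Tiso1 /= (a1K HG).
have t2 : tII (a1 (a0 z)) by move: (face_has_typeII z); rewrite t0 t1.
by exists ((exist _ (a1 (a0 z)) t2 : IIdart) : IImap, i2); rewrite Tiso2 /= (a1K HG) (a0K HG).
Qed.

Lemma Tiso_bij : bijective Tiso.
Proof.
apply: inj_card_bij Tiso_inj _.
rewrite -(card_codom Tiso_inj); apply: subset_leq_card; apply/subsetP => z _.
by case: (Tiso_surj z) => p <-; exact: codom_f.
Qed.

Lemma IImap_connected : gconnected IImap.
Proof.
case: Tiso_bij => g Tiso_g g_Tiso.
have proj_arel (p q : Tmap IImap) : arel p q -> connect (@arel IImap) p.1 q.1.
  rewrite /arel => /or3P [] /eqP ->; case: p => x i; case: (ord3P i) => ->;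
  rewrite ?TmapE /=; try exact: connect0; apply: connect1; by rewrite /arel eqxx ?orbT.
have lift a b : connect (@arel G) a b -> connect (@arel IImap) (g a).1 (g b).1.
  apply: (homo_connect (f := fun z => (g z).1)) => {}a {}b ab; apply: proj_arel.
  move: ab; rewrite -{1}(g_Tiso a) /arel -Tiso_a0 -Tiso_a1 -Tiso_a2.
  by case/or3P => /eqP ->; rewrite Tiso_g eqxx ?orbT.
move=> x y; case: Htri => _ Gconn _ _.
by move: (lift _ _ (Gconn (Tiso (x, i0)) (Tiso (y, i0)))); rewrite !Tiso_g.
Qed.

Lemma Tiso_typeII_vertex (p : Tmap IImap) :
  typeII_vertex tau (Tiso p) = (nat_of_ord p.2 != 2).
Proof.
case: p => x i; case: (ord3P i) => ->; rewrite !TisoE /=.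
- rewrite (typeII_vertexE HG Hz G_loopless); apply/existsP; exists (val x).
  by rewrite (valP x) andbT sameV_refl.
- rewrite (typeII_vertexE HG Hz G_loopless); apply/existsP; exists (val x).
  by rewrite (valP x) andbT sameV_sym // sameV1.
- exact: at_apex_typeII_vertex (typeII_at_apex (valP x)).
Qed.

Lemma Tiso_typeII_edge (p : Tmap IImap) : tII (Tiso p) = (nat_of_ord p.2 == 0).
Proof.
case: p => x i; case: (ord3P i) => ->; rewrite !TisoE /= ?(valP x) // ?tII_a0;
by case: (typeII_face_others (valP x)) => /negbTE ->.
Qed.

Lemma Tiso_typeII_tail (x : IImap) : typeII_tail tau (Tiso (x, i0)) = IItail x.
Proof. by rewrite Tiso0 (typeII_tailE HG Hz G_loopless) (valP x). Qed.

Lemma IImap_good_directed_embedding : good_directed_embedding IItail.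
Proof.
split; first exact: IImap_is_gmap.
split; first exact: IImap_connected.
split; first exact: IImap_simple.
split; first by move=> x; split; [exact: IImap_face_vertices | exact: IImap_face_edges].
split; first by move=> x; split; [exact: IItail_a2 | exact: IItail_a0].
by split; [exact: IImap_eulerian | exact: IItail_a1].
Qed.

Lemma Tiso_gmap_iso : gmap_iso Tiso.
Proof. by split; [exact: Tiso_bij | exact: Tiso_a0 | exact: Tiso_a1 | exact: Tiso_a2]. Qed.

End TypeIISubgraph.

Theorem theorem1 :
  (* (a) *)
  (forall (G : gmap) (tau : {set G}),
     triangulation G -> z_orientation tau ->
     (forall x : G, typeI_face tau x) ->
     (forall x : G, x \in tau -> homogeneous tau x) ->
     exists (G' : gmap) (tl : pred G') (phi : Tmap G' -> G),
       good_directed_embedding tl /\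
       gmap_iso phi /\
       (forall p : Tmap G', typeII_vertex tau (phi p) = (nat_of_ord p.2 != 2)) /\
       (forall p : Tmap G', typeII_edge tau (phi p) = (nat_of_ord p.2 == 0)) /\
       (forall x : G', typeII_tail tau (phi ((x, i0) : Tmap G')) = tl x))
  /\
  (* (b) *)
  (forall (G' : gmap) (tl : pred G'),
     good_directed_embedding tl ->
     exists! tau : {set Tmap G'},
       z_orientation tau /\
       (forall p : Tmap G', typeI_face tau p) /\
       (forall p : Tmap G', p \in tau -> homogeneous tau p) /\
       (forall p : Tmap G', typeII_vertex tau p = (nat_of_ord p.2 != 2)) /\
       (forall p : Tmap G', typeII_edge tau p = (nat_of_ord p.2 == 0)) /\
       (forall x : G', typeII_tail tau ((x, i0) : Tmap G') = tl x)).
Proof.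
split=> [G tau Htri Hz Hface Hhom | H tl Hgood].
- exists (IImap Htri Hz Hface Hhom), (@IItail _ _ Htri Hz Hface Hhom),
    (@Tiso _ _ Htri Hz Hface Hhom).
  split; first exact: IImap_good_directed_embedding.
  split; first exact: Tiso_gmap_iso.
  split; first exact: Tiso_typeII_vertex.
  split; first exact: Tiso_typeII_edge.
  exact: Tiso_typeII_tail.
- exists (Ttau tl); split.
    split; first exact: Ttau_z_orientation.
    split; first exact: Ttau_typeI_face.
    split; first by move=> p _; exact: Ttau_homogeneous.
    split; first exact: Ttau_typeII_vertex.
    split; [exact: Ttau_typeII_edge | exact: Ttau_typeII_tail].
  by move=> tau [Hz [_ [_ [_ [tauII tau_tail]]]]]; rewrite (Ttau_unique Hgood Hz tauII tau_tail).
Qed.
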